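(* Let $a,b,c,x\in X$ with $a\ge b$, $a\neq b$, $x\ge c$, $x\ne c$. Then: (1) $\tau_{a,b}\,c_{x,\{c\}}\,\tau_{a,b}^{-1}\in K_{\{a,b,c,x\}}$; (2) for any $Y\subset X$ such that the partial conjugation $c_{x,Y}$ is defined, $\tau_{a,b}c_{x,Y}\tau_{a,b}^{-1}$ is a product of elements of $K_{\{a,b,x\}}$ and partial conjugations of the form $c_{z,Y'}$ with $z\in\{a,x\}$ and $Y'\subset Y\cup\{x,a\}$; (3) if $c_x$ denotes conjugation by $x$, then $\tau_{a,b}c_x\tau_{a,b}^{-1}\in K_{\{a,b,x\}}$.
   Context: $\Gamma$ is a finite simplicial graph with vertex set $X$, $A_\Gamma$ its right-angled Artin group ($x,y\in X$ commute iff adjacent). $L=X\cup X^{-1}$; for $u\in L$, $\bar u\in X$ is the vertex with $u\in\{\bar u,\bar u^{-1}\}$. $\mathrm{lk}(v)$ is the set of neighbours of $v$, $\mathrm{st}(v)=\mathrm{lk}(v)\cup\{v\}$. Domination: for $v,w\in X$, $v\ge w$ iff $\mathrm{lk}(w)\subset\mathrm{st}(v)$; for letters $u,u'\in L$, $u\ge u'$ iff $\bar u\ge\bar u'$. For $u,v\in L$ with $u\ge v$, $\bar u\ne\bar v$, the transvection $\tau_{u,v}$ is the automorphism sending $v\mapsto vu$ and fixing all generators other than $\bar v$. For $u\in L$ and $Y$ a union of connected components of $\Gamma-\mathrm{st}(\bar u)$, the partial conjugation $c_{u,Y}$ sends $y\mapsto u^{-1}yu$ for $y\in Y$ and fixes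 the other generators. For $u\ge v$, $\bar u\neq \bar v$, we write $c_{u,\{v\}}$ for the automorphism sending $v\mapsto u^{-1}vu$ and fixing all other generators (a one-term partial conjugation). For $x,y,c\in L$ with $x,y\ge c$ and $\bar x,\bar y,\bar c$ distinct, $\tau_{[x,y],c}$ is the automorphism sending $c\mapsto c[x,y]$ and fixing all generators other than $\bar c$. For $Z\subset X$, $K_Z\le\mathrm{Aut}\,A_\Gamma$ is the subgroup generated by all $\tau_{[x,y],c}$ and all $c_{x,\{c\}}$ with $x,y,c\in Z$ (pairwise distinct where required) and $x,y\ge c$, together with all inner automorphisms of $A_\Gamma$. *)

From mathcomp Require Import all_boot.
Set Implicit Arguments. Unset Strict Implicit. Unset Printing Implicit Defensive.

Section RAAG.
Variable T : finType.          (* vertex set X of Gamma *)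
Variable adj : rel T.

(* A letter (v, false) is the generator v, (v, true) is v^{-1}. *)
Definition letter := (T * bool)%type.
Definition word := seq letter.

Definition inv_letter (l : letter) : letter := (l.1, ~~ l.2).
Definition winv (w : word) : word := rev (map inv_letter w).
Definition gen1 (v : T) : word := [:: (v, false)].

Inductive raag_eq : word -> word -> Prop :=
| req_refl w : raag_eq w w
| req_sym w1 w2 : raag_eq w1 w2 -> raag_eq w2 w1
| req_trans w1 w2 w3 : raag_eq w1 w2 -> raag_eq w2 w3 -> raag_eq w1 w3
| req_cancel u v (l : letter) : raag_eq (u ++ [:: l; inv_letter l] ++ v) (u ++ v)
| req_comm u v (l m : letter) : adj l.1 m.1 ->
    raag_eq (u ++ [:: l; m] ++ v) (u ++ [:: m; l] ++ v).

(* Endomorphisms of A_Gamma, given by images of the generators. *)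
Definition endo := T -> word.

Definition wsubst (f : endo) (w : word) : word :=
  flatten (map (fun l : letter => if l.2 then winv (f l.1) else f l.1) w).

(* f respects the defining relations, so it induces an endomorphism *)
Definition is_hom (f : endo) : Prop :=
  forall u v, adj u v -> raag_eq (f u ++ f v) (f v ++ f u).

(* equality as maps A_Gamma -> A_Gamma *)
Definition eqv (f g : endo) : Prop := forall v, raag_eq (f v) (g v).

Definition idm : endo := gen1.
(* functional composition: (ecomp f g) = f o g *)
Definition ecomp (f g : endo) : endo := fun v => wsubst f (g v).
Definition is_inv (f g : endo) : Prop := eqv (ecomp f g) idm /\ eqv (ecomp g f) idm.

Inductive gen_sub (S : endo -> Prop) : endo -> Prop :=
| gs_base f : S f -> gen_sub S f
| gs_id : gen_sub S idm
| gs_comp f g : gen_sub S f -> gen_sub S g -> gen_sub S (ecomp f g)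
| gs_inv f g : gen_sub S f -> is_hom g -> is_inv f g -> gen_sub S g
| gs_eqv f g : gen_sub S f -> eqv f g -> gen_sub S g.

Definition product_of (P : endo -> Prop) (f : endo) : Prop :=
  exists fs : seq endo, (forall i, i < size fs -> P (nth idm fs i)) /\ eqv f (foldr ecomp idm fs).

(* domination on vertices: v >= w iff lk(w) is contained in st(v) *)
Definition dom (v w : T) : bool := [forall t, adj w t ==> (adj v t || (t == v))].

(* The automorphism sending the letter l to l s and fixing all generators
   other than the underlying vertex of l.  If l = w^{-1}, this means
   w^{-1} |-> w^{-1} s, i.e. w |-> s^{-1} w. *)
Definition right_mult (l : letter) (s : word) : endo := fun t =>
  if t == l.1 then (if l.2 then winv s ++ gen1 t else gen1 t ++ s) else gen1 t.

(* transvection tau_{u,v} : v |-> v u *)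
Definition transv (u v : letter) : endo := right_mult v [:: u].

Definition commw (x y : letter) : word := [:: inv_letter x; inv_letter y; x; y].

Definition tau_comm (x y c : letter) : endo := right_mult c (commw x y).

Definition pconj (u : letter) (Y : {set T}) : endo := fun t =>
  if t \in Y then [:: inv_letter u; (t, false); u] else gen1 t.

Definition inner (w : word) : endo := fun t => winv w ++ gen1 t ++ w.

(* Y is a union of connected components of Gamma - st(v) *)
Definition pc_domain (v : T) (Y : {set T}) : Prop :=
  (forall y, y \in Y -> ~~ adj v y /\ y != v) /\
  (forall y t, y \in Y -> adj y t -> ~~ adj v t -> t != v -> t \in Y).

Definition K_gens (Z : {set T}) (f : endo) : Prop :=
  (exists x y c : letter,
      [/\ x.1 \in Z, y.1 \in Z, c.1 \in Z & [/\ x.1 != y.1, x.1 != c.1, y.1 != c.1,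
        dom x.1 c.1 & dom y.1 c.1]] /\ eqv f (tau_comm x y c))
  \/ (exists (x : letter) (c : T),
      [/\ x.1 \in Z, c \in Z, x.1 != c & dom x.1 c] /\ eqv f (pconj x [set c]))
  \/ (exists w : word, eqv f (inner w)).

Definition K_sub (Z : {set T}) : endo -> Prop := gen_sub (K_gens Z).
End RAAG.

(* Conjugation by [tau = tau_{a,b}] is computed by exhibiting, for each automorphism [p],
   an automorphism [g] with [tau p = g tau], an identity of words checked on each
   generator; then [tau p tau^-1 = g].  For a partial conjugation [c_{x,Y}] with [x <> b],
   [tau] and [c_{x,Y}] commute unless exactly one of [a], [b] lies in [Y] and [x] is not
   adjacent to [a]; then [x] dominates [b], and [g] is [c_{x,Y} tau_{[x,a^-1],b}] if
   [b \in Y] and [tau_{[a^-1,x],b} c_{x,Y}] if [a \in Y].  For [x = b], [g] is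
   [c_{b,Y} c_{a,Y - lk a}] when [a \notin Y] and [c_{a,(Y - st a) + b} c_{b,Y}] when
   [a \in Y], and these new sets are again unions of components of [Gamma - st a].
   Part (1) runs through the same identities with [Y = {c}], and conjugating the inner
   automorphism by [w] gives the inner automorphism by [tau w]. *)

From mathcomp Require Import all_boot.
Set Implicit Arguments. Unset Strict Implicit. Unset Printing Implicit Defensive.

Section Words.
Variables (T : finType) (adj : rel T).
Local Notation req := (raag_eq adj).

Lemma req_catl u w1 w2 : req w1 w2 -> req (u ++ w1) (u ++ w2).
Proof.
elim=> [w|w1' w2' _ IH|w1' w2' w3' _ IH1 _ IH2|u' v l|u' v l m h].
- exact: req_refl.
- exact: req_sym.
- exact: req_trans IH1 IH2.
- by move: (req_cancel adj (u ++ u') v l); rewrite -!catA.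
- by move: (req_comm (u ++ u') v h); rewrite -!catA.
Qed.

Lemma req_catr v w1 w2 : req w1 w2 -> req (w1 ++ v) (w2 ++ v).
Proof.
elim=> [w|w1' w2' _ IH|w1' w2' w3' _ IH1 _ IH2|u' v' l|u' v' l m h].
- exact: req_refl.
- exact: req_sym.
- exact: req_trans IH1 IH2.
- by move: (req_cancel adj u' (v' ++ v) l); rewrite -!catA.
- by move: (req_comm u' (v' ++ v) h); rewrite -!catA.
Qed.

Lemma req_cat u1 u2 v1 v2 : req u1 u2 -> req v1 v2 -> req (u1 ++ v1) (u2 ++ v2).
Proof. by move=> h1 h2; apply: req_trans (req_catr _ h1) (req_catl _ h2). Qed.

Lemma req_cons l w1 w2 : req w1 w2 -> req (l :: w1) (l :: w2).
Proof. exact: (req_catl [:: l]). Qed.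

Lemma req_cancel_head (v : T) (b : bool) w : req ((v, b) :: (v, ~~ b) :: w) w.
Proof. exact: (req_cancel adj [::] w (v, b)). Qed.

Lemma req_swap_head (l m : letter T) w : adj l.1 m.1 -> req (l :: m :: w) (m :: l :: w).
Proof. exact: (req_comm [::] w). Qed.

Lemma req_swap_head_eq (l m : letter T) w :
  adj l.1 m.1 || (l.1 == m.1) -> req (l :: m :: w) (m :: l :: w).
Proof.
case/orP; first exact: req_swap_head.
case: l m => v b [_ b'] /= /eqP <-.
case: (b =P b') => [<-|/eqP]; first exact: req_refl.
move=> /negPf hb; have -> : b' = ~~ b by case: b b' hb => [] [].
apply: req_trans (req_cancel_head _ _ _) _.
by apply: req_sym; have := req_cancel_head v (~~ b) w; rewrite negbK.
Qed.

Lemma winv_cat (u v : word T) : winv (u ++ v) = winv v ++ winv u.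
Proof. by rewrite /winv map_cat rev_cat. Qed.

Lemma winv_cons (l : letter T) w : winv (l :: w) = winv w ++ [:: inv_letter l].
Proof. by rewrite /winv /= rev_cons cats1. Qed.

Lemma inv_letterK : involutive (@inv_letter T).
Proof. by case=> v b; rewrite /inv_letter /= negbK. Qed.

Lemma winvK : involutive (@winv T).
Proof. by move=> w; rewrite /winv map_rev revK (mapK inv_letterK). Qed.

Lemma req_cat_winv w : req (w ++ winv w) [::].
Proof.
elim/last_ind: w => [|w [v b] IH]; first exact: req_refl.
rewrite -cats1 winv_cat -catA; apply: req_trans _ IH; apply: req_catl.
exact: req_cancel_head.
Qed.

Lemma req_winv_cat w : req (winv w ++ w) [::].
Proof. by have := req_cat_winv (winv w); rewrite winvK. Qed.

Lemma wsubst_cat (f : endo T) u v : wsubst f (u ++ v) = wsubst f u ++ wsubst f v.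
Proof. by rewrite /wsubst map_cat flatten_cat. Qed.

Lemma wsubst_cons (f : endo T) l u :
  wsubst f (l :: u) = (if l.2 then winv (f l.1) else f l.1) ++ wsubst f u.
Proof. by []. Qed.

Lemma wsubst_gen1 (f : endo T) v : wsubst f (gen1 v) = f v.
Proof. by rewrite /gen1 wsubst_cons /= cats0. Qed.

Lemma wsubst_winv (f : endo T) w : wsubst f (winv w) = winv (wsubst f w).
Proof.
elim: w => [|[v b] w IH] //.
rewrite winv_cons wsubst_cat IH wsubst_cons winv_cat /= cats0.
by case: b => //=; rewrite winvK.
Qed.

Lemma wsubst_ecomp (f g : endo T) w : wsubst (ecomp f g) w = wsubst f (wsubst g w).
Proof.
elim: w => [|[v b] w IH] //.
by rewrite !wsubst_cons wsubst_cat IH /ecomp; case: b => //=; rewrite wsubst_winv.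
Qed.

Lemma eqv_refl (f : endo T) : eqv adj f f.
Proof. by move=> v; apply: req_refl. Qed.

Lemma eqv_sym (f g : endo T) : eqv adj f g -> eqv adj g f.
Proof. by move=> h v; apply: req_sym. Qed.

Definition wcommute (u v : word T) : Prop := req (u ++ v) (v ++ u).

Lemma wcommute_sym u v : wcommute u v -> wcommute v u.
Proof. exact: req_sym. Qed.

Lemma wcommute_winvl u v : wcommute u v -> wcommute (winv u) v.
Proof.
rewrite /wcommute => h.
apply: req_trans (_ : req _ (winv u ++ ((v ++ u) ++ winv u))) _.
  rewrite -catA; apply: req_catl; apply: req_sym.
  by have := req_catl v (req_cat_winv u); rewrite cats0.
apply: req_trans (req_catl _ (req_catr _ (req_sym h))) _.
by have := req_catr (v ++ winv u) (req_winv_cat u); rewrite -!catA.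
Qed.

Lemma wcommute_letter (l : letter T) w :
  (forall m, m \in w -> adj l.1 m.1 || (l.1 == m.1)) -> wcommute [:: l] w.
Proof.
rewrite /wcommute; elim: w => [|m w IH] H /=; first exact: req_refl.
apply: req_trans (req_swap_head_eq _ _) _; first by apply: H; rewrite inE eqxx.
by apply: req_cons; apply: IH => m' hm'; apply: H; rewrite inE hm' orbT.
Qed.

Lemma wsubst_req (f : endo T) w1 w2 : is_hom adj f -> req w1 w2 -> req (wsubst f w1) (wsubst f w2).
Proof.
move=> hf; elim=> [w|w1' w2' _ IH|w1' w2' w3' _ IH1 _ IH2|u v l|u v l m h].
- exact: req_refl.
- exact: req_sym.
- exact: req_trans IH1 IH2.
- rewrite !wsubst_cat; apply: req_catl; rewrite !wsubst_cons /= catA.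
  by case: l => y [] /=; rewrite cats0;
    [exact: req_catr (req_winv_cat _) | exact: req_catr (req_cat_winv _)].
- rewrite !wsubst_cat; apply: req_catl; rewrite !wsubst_cons /= !cats0; apply: req_catr.
  have H : wcommute (f l.1) (f m.1) by apply: hf.
  case: l m h H => y [] [z []] /= _ H.
  + exact: wcommute_winvl (wcommute_sym (wcommute_winvl (wcommute_sym H))).
  + exact: wcommute_winvl H.
  + exact: wcommute_sym (wcommute_winvl (wcommute_sym H)).
  + exact: H.
Qed.

Lemma is_hom_ecomp (f g : endo T) : is_hom adj f -> is_hom adj g -> is_hom adj (ecomp f g).
Proof. by move=> hf hg u v h; rewrite /ecomp -!wsubst_cat; apply: wsubst_req => //; apply: hg. Qed.

Hypothesis adj_sym : symmetric adj.

Lemma req_winv w1 w2 : req w1 w2 -> req (winv w1) (winv w2).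
Proof.
elim=> [w|w1' w2' _ IH|w1' w2' w3' _ IH1 _ IH2|u v l|u v l m h].
- exact: req_refl.
- exact: req_sym.
- exact: req_trans IH1 IH2.
- rewrite !winv_cat -catA; apply: req_catl.
  by case: l => y b; rewrite /winv /inv_letter /= negbK; apply: req_cancel_head.
- rewrite !winv_cat; apply: req_catr; apply: req_catl.
  by apply: req_swap_head; rewrite /= adj_sym.
Qed.

Lemma wsubst_eqv (f g : endo T) w : eqv adj f g -> req (wsubst f w) (wsubst g w).
Proof.
move=> h; elim: w => [|[v b] w IH]; first exact: req_refl.
by rewrite !wsubst_cons; apply: req_cat => //; case: b => /=; [apply: req_winv | apply: h].
Qed.

Lemma conj_eqv_of_intertwine (tau tau_inv p g : endo T) :
  is_hom adj g -> is_inv adj tau tau_inv ->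
  eqv adj (ecomp tau p) (ecomp g tau) -> eqv adj (ecomp (ecomp tau p) tau_inv) g.
Proof.
move=> hg [tauK _] h v; rewrite /ecomp.
apply: req_trans (wsubst_eqv _ h) _.
rewrite -/(ecomp g tau) wsubst_ecomp.
by apply: req_trans (wsubst_req hg (tauK v)) _; rewrite /idm wsubst_gen1; apply: req_refl.
Qed.

End Words.

Section Domination.
Variables (T : finType) (adj : rel T).
Hypothesis adj_sym : symmetric adj.

Lemma domP v w t : dom adj v w -> adj w t -> adj v t || (t == v).
Proof. by move/forallP => /(_ t) /implyP. Qed.

Lemma domI v w : (forall t, adj w t -> adj v t || (t == v)) -> dom adj v w.
Proof. by move=> H; apply/forallP => t; apply/implyP; apply: H. Qed.

Lemma dom_trans v w u : dom adj v w -> dom adj w u -> dom adj v u.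
Proof.
move=> hvw hwu; apply: domI => t hut.
case/orP: (domP hwu hut) => [hwt|/eqP etw]; first exact: domP hvw hwt.
subst t; have hwu' : adj w u by rewrite adj_sym.
case/orP: (domP hvw hwu') => [hvu|/eqP euv]; last by subst u; rewrite hut.
have huv : adj u v by rewrite adj_sym.
by case/orP: (domP hwu huv) => [hwv|/eqP ->]; rewrite ?eqxx ?orbT // adj_sym hwv.
Qed.

Lemma pc_domain_notin (x : T) Y : pc_domain adj x Y -> x \notin Y.
Proof. by case=> D1 _; apply/negP => /D1 []; rewrite eqxx. Qed.

Lemma dom_pc_domain_in_out (a b x : T) Y :
  pc_domain adj x Y -> dom adj a b -> b \in Y -> a \notin Y -> ~~ adj a x -> a != x ->
  dom adj x b.
Proof.
move=> [_ D2] hab hbY haY nax anx; apply: domI => t hbt.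
apply/negPn/negP; rewrite negb_or => /andP[nxt ntx].
have htY : t \in Y by apply: D2 hbY hbt nxt ntx.
case/orP: (domP hab hbt) => [hat|/eqP eta]; last by subst t; rewrite htY in haY.
have hta : adj t a by rewrite adj_sym.
have nxa : ~~ adj x a by rewrite adj_sym.
by rewrite (D2 t a htY hta nxa anx) in haY.
Qed.

Lemma dom_pc_domain_out_in (a b x : T) Y :
  pc_domain adj x Y -> dom adj a b -> b \notin Y -> a \in Y -> ~~ adj a x -> b != x ->
  dom adj x b.
Proof.
move=> [D1 D2] hab hbY haY nax bnx.
have nxb : ~~ adj x b.
  apply/negP => hxb; have hbx : adj b x by rewrite adj_sym.
  case/orP: (domP hab hbx) => [hax|/eqP exa]; first by rewrite hax in nax.
  by subst x; case: (D1 _ haY); rewrite eqxx.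
have hbY' t : t \in Y -> adj t b -> False.
  by move=> htY htb; rewrite (D2 t b htY htb nxb bnx) in hbY.
apply: domI => t hbt; apply/negPn/negP; rewrite negb_or => /andP[nxt ntx].
case/orP: (domP hab hbt) => [hat|/eqP eta].
- by apply: (hbY' t); [apply: D2 haY hat nxt ntx | rewrite adj_sym].
- by subst t; apply: (hbY' a haY); rewrite adj_sym.
Qed.

End Domination.

(* [cancel_at n] and [swap_at n] rewrite the left-hand word at its [n]-th letter (from 0). *)
Ltac at_position n tac :=
  lazymatch n with 0 => tac | S ?m => apply: req_cons; at_position m tac end.
Ltac cancel_at n := eapply req_trans; [at_position n ltac:(apply: req_cancel_head) |].
Ltac adjacent := rewrite /=;
  first [assumption | match goal with H : symmetric _ |- _ => rewrite H; assumption end].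
Ltac swap_at n := eapply req_trans; [at_position n ltac:(apply: req_swap_head; adjacent) |].
Ltac unfold_words := rewrite /wsubst /winv /inv_letter /=.

Section Homomorphisms.
Variables (T : finType) (adj : rel T).
Hypotheses (adj_sym : symmetric adj) (adj_irr : irreflexive adj).
Local Notation req := (raag_eq adj).

Lemma pconj_commute_mixed (z u v : T) : adj u v -> adj z v || (v == z) ->
  req [:: (z, true); (u, false); (z, false); (v, false)]
      [:: (v, false); (z, true); (u, false); (z, false)].
Proof.
move=> huv /orP[hzv|/eqP hv]; last subst v.
- swap_at 2; swap_at 1; swap_at 0; exact: req_refl.
- apply: req_sym; cancel_at 0; apply: req_sym; swap_at 0; cancel_at 1; exact: req_refl.
Qed.

Lemma is_hom_pconj (z : T) (Y : {set T}) :
  (forall s t, s \in Y -> t \notin Y -> adj s t -> adj z t || (t == z)) ->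
  is_hom adj (pconj (z, false) Y).
Proof.
move=> H u v huv; rewrite /pconj /gen1.
case: (boolP (u \in Y)) => hu; case: (boolP (v \in Y)) => hv /=.
- cancel_at 2; apply: req_sym; cancel_at 2; swap_at 1; exact: req_refl.
- exact: pconj_commute_mixed huv (H _ _ hu hv huv).
- have hvu : adj v u by rewrite adj_sym.
  exact: req_sym (pconj_commute_mixed hvu (H _ _ hv hu hvu)).
- exact: req_swap_head.
Qed.

Lemma is_hom_pconj_domain (z : T) Y : pc_domain adj z Y -> is_hom adj (pconj (z, false) Y).
Proof.
move=> [_ closedY]; apply: is_hom_pconj => s t hs ht hst.
apply/negPn/negP; rewrite negb_or => /andP[h1 h2].
by rewrite (closedY s t hs hst h1 h2) in ht.
Qed.

Lemma is_hom_pconj1 (z c : T) : dom adj z c -> is_hom adj (pconj (z, false) [set c]).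
Proof.
by move=> h; apply: is_hom_pconj => s t; rewrite inE => /eqP -> _; apply: domP.
Qed.

Lemma is_hom_right_mult (v : T) (s : word T) :
  (forall t m, adj v t -> m \in s -> adj m.1 t || (t == m.1)) ->
  is_hom adj (right_mult (v, false) s).
Proof.
move=> H.
have move_past_s u w : adj u w -> (forall m, m \in s -> adj m.1 w || (w == m.1)) ->
    req ((u, false) :: s ++ [:: (w, false)]) ((w, false) :: (u, false) :: s).
  move=> huw Hw; apply: req_trans (_ : req ((u, false) :: (w, false) :: s) _).
    apply: req_cons; apply: req_sym; apply: wcommute_letter => m hm.
    by rewrite /= [adj w _]adj_sym; apply: Hw.
  exact: req_swap_head.
move=> u w huw; rewrite /right_mult /gen1 /=.
case: (u =P v) => [eu|_]; case: (w =P v) => [ew|_] /=.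
- by move: huw; rewrite eu ew adj_irr.
- by apply: move_past_s => // m hm; apply: H; rewrite -?eu.
- apply: req_sym; apply: move_past_s; first by rewrite adj_sym.
  by move=> m hm; apply: H; rewrite -?ew 1?adj_sym.
- exact: req_swap_head.
Qed.

Lemma is_hom_tau_comm (y z : letter T) (c : T) :
  dom adj y.1 c -> dom adj z.1 c -> is_hom adj (tau_comm y z (c, false)).
Proof.
move=> hy hz; apply: is_hom_right_mult => t m hct.
rewrite /commw !inE => /or4P[] /eqP -> /=; by [apply: domP hy hct | apply: domP hz hct].
Qed.

Lemma is_hom_inner (w : word T) : is_hom adj (inner w).
Proof.
move=> u v huv; rewrite /inner /gen1 -!catA /=; apply: req_catl.
apply: req_trans (_ : req [:: (u, false), (v, false) & w] _).
  by apply: req_cons; rewrite catA; exact: req_catr (req_cat_winv _ _).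
apply: req_trans; first by apply: req_swap_head; exact: huv.
by apply: req_sym; apply: req_cons; rewrite catA; exact: req_catr (req_cat_winv _ _).
Qed.

Lemma wsubst_inner (w u : word T) : req (wsubst (inner w) u) (winv w ++ u ++ w).
Proof.
elim: u => [|[y b] u IH] /=; first exact: req_sym (req_winv_cat _ _).
rewrite wsubst_cons /=.
have -> : (if b then winv (inner w y) else inner w y) = winv w ++ (y, b) :: w.
  by rewrite /inner /gen1; case: b => //=; rewrite winv_cat winvK winv_cons -catA.
rewrite -catA /=; apply: req_catl; apply: req_cons.
apply: req_trans (req_catl _ IH) _.
by rewrite catA; exact: req_catr (req_cat_winv _ _).
Qed.

End Homomorphisms.

Section Intertwining.
Variables (T : finType) (adj : rel T).
Hypothesis adj_sym : symmetric adj.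
Variables (a b : T).
Hypothesis neq_ab : a != b.
Local Notation tau := (transv (a, false) (b, false)).

Lemma transv_pconj_commute (x : T) (Y : {set T}) :
  x != b -> ((b \in Y) == (a \in Y)) || adj x a || ((x == a) && (a \notin Y)) ->
  eqv adj (ecomp tau (pconj (x, false) Y)) (ecomp (pconj (x, false) Y) tau).
Proof.
move: neq_ab => /negPf eq_ab /negPf hxb hc t.
rewrite /ecomp /transv /right_mult /pconj /gen1 /=.
case: (t =P b) => [->|/eqP/negPf htb].
- case hbY: (b \in Y); case haY: (a \in Y);
    do 3! (unfold_words; rewrite ?eqxx ?eq_ab ?hxb ?hbY ?haY /=).
  + by apply: req_sym; cancel_at 2; apply: req_refl.
  + move: hc; rewrite hbY haY /= => /orP[hxa|/andP[/eqP exa _]].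
    * by swap_at 2; apply: req_refl.
    * by subst x; apply: req_refl.
  + move: hc; rewrite hbY haY /= andbF orbF => hxa.
    by apply: req_sym; swap_at 1; cancel_at 2; apply: req_refl.
  + exact: req_refl.
- by case htY: (t \in Y); do 3! (unfold_words; rewrite ?htb ?hxb ?htY /=); apply: req_refl.
Qed.

Lemma transv_pconj_tau_comm_r (x : T) (Y : {set T}) :
  x != b -> b \in Y -> a \notin Y -> x \notin Y ->
  eqv adj (ecomp tau (pconj (x, false) Y))
          (ecomp (ecomp (pconj (x, false) Y) (tau_comm (x, false) (a, true) (b, false))) tau).
Proof.
move: neq_ab => /negPf eq_ab /negPf hxb hbY /negPf haY /negPf hxY t.
rewrite /ecomp wsubst_ecomp /transv /tau_comm /commw /right_mult /pconj /gen1 /=.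
case: (t =P b) => [->|/eqP/negPf htb].
- do 3! (unfold_words; rewrite ?eqxx ?eq_ab ?hxb ?hbY ?haY ?hxY /=).
  by apply: req_sym; cancel_at 2; cancel_at 4; apply: req_refl.
- by case htY: (t \in Y); do 3! (unfold_words; rewrite ?htb ?hxb ?htY /=); apply: req_refl.
Qed.

Lemma transv_pconj_tau_comm_l (x : T) (Y : {set T}) :
  x != b -> b \notin Y -> a \in Y -> x \notin Y ->
  eqv adj (ecomp tau (pconj (x, false) Y))
          (ecomp (ecomp (tau_comm (a, true) (x, false) (b, false)) (pconj (x, false) Y)) tau).
Proof.
move: neq_ab => /negPf eq_ab /negPf hxb /negPf hbY haY /negPf hxY t.
rewrite /ecomp wsubst_ecomp /transv /tau_comm /commw /right_mult /pconj /gen1 /=.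
case: (t =P b) => [->|/eqP/negPf htb].
- do 3! (unfold_words; rewrite ?eqxx ?eq_ab ?hxb ?hbY ?haY ?hxY /=).
  by apply: req_sym; cancel_at 4; cancel_at 3; cancel_at 2; apply: req_refl.
- by case htY: (t \in Y); do 3! (unfold_words; rewrite ?htb ?hxb ?htY /=); apply: req_refl.
Qed.

Lemma transv_pconjb_out (Y : {set T}) :
  b \notin Y -> a \notin Y -> (forall t, t \in Y -> adj a t -> adj a b) ->
  eqv adj (ecomp tau (pconj (b, false) Y))
          (ecomp (ecomp (pconj (b, false) Y) (pconj (a, false) [set y in Y | ~~ adj a y])) tau).
Proof.
move: neq_ab => /negPf eq_ab /negPf hbY /negPf haY hYab t.
rewrite /ecomp wsubst_ecomp /transv /right_mult /pconj /gen1 /=.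
case: (t =P b) => [->|/eqP/negPf htb].
- by do 3! (unfold_words; rewrite ?inE ?eqxx ?eq_ab ?hbY ?haY /=); apply: req_refl.
- case htY: (t \in Y); case hat: (adj a t);
    do 3! (unfold_words; rewrite ?inE ?eqxx ?eq_ab ?htb ?htY ?hat ?haY ?hbY /=);
    try exact: req_refl.
  have habj := hYab t htY hat.
  by swap_at 0; swap_at 1; swap_at 2; cancel_at 3; apply: req_refl.
Qed.

Lemma transv_pconjb_in (Y : {set T}) :
  b \notin Y -> a \in Y ->
  eqv adj (ecomp tau (pconj (b, false) Y))
          (ecomp (ecomp (pconj (a, false) ([set y in Y | ~~ adj a y & y != a] :|: [set b]))
                        (pconj (b, false) Y)) tau).
Proof.
move: neq_ab => /negPf eq_ab /negPf hbY haY t.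
rewrite /ecomp wsubst_ecomp /transv /right_mult /pconj /gen1 /=.
case: (t =P b) => [->|/eqP/negPf htb].
- do 3! (unfold_words; rewrite ?inE ?eqxx ?eq_ab ?hbY ?haY ?andbF ?orbT /=).
  by apply: req_sym; cancel_at 2; cancel_at 1; cancel_at 0; cancel_at 0; apply: req_refl.
- case: (t =P a) => [->|/eqP/negPf hta].
  + do 3! (unfold_words; rewrite ?inE ?eqxx ?eq_ab ?haY ?andbF ?orbT /=).
    by apply: req_sym; cancel_at 3; apply: req_refl.
  case htY: (t \in Y); case hat: (adj a t);
    do 3! (unfold_words; rewrite ?inE ?eqxx ?eq_ab ?htb ?htY ?hat ?hta ?haY ?hbY ?andbF /=);
    try exact: req_refl; apply: req_sym.
  + by swap_at 2; cancel_at 3; apply: req_refl.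
  + by cancel_at 2; cancel_at 3; apply: req_refl.
Qed.

End Intertwining.

Section Generators.
Variables (T : finType) (adj : rel T).

Lemma K_sub_pconj1 (Z : {set T}) (x c : T) :
  x \in Z -> c \in Z -> x != c -> dom adj x c -> K_sub adj Z (pconj (x, false) [set c]).
Proof.
move=> *; apply: gs_base; right; left.
by exists (x, false), c; split; [split | apply: eqv_refl].
Qed.

Lemma K_sub_tau_comm (Z : {set T}) (y z c : letter T) :
  y.1 \in Z -> z.1 \in Z -> c.1 \in Z -> y.1 != z.1 -> y.1 != c.1 -> z.1 != c.1 ->
  dom adj y.1 c.1 -> dom adj z.1 c.1 -> K_sub adj Z (tau_comm y z c).
Proof.
move=> *; apply: gs_base; left.
by exists y, z, c; split; [split | apply: eqv_refl].
Qed.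

Lemma product_of1 (P : endo T -> Prop) (f g : endo T) :
  P g -> eqv adj f g -> product_of adj P f.
Proof.
move=> hg hf; exists [:: g]; split; first by case.
by move=> t; apply: req_trans (hf t) _; rewrite /= /ecomp /idm wsubst_gen1; apply: req_refl.
Qed.

Lemma product_of2 (P : endo T -> Prop) (f g1 g2 : endo T) :
  P g1 -> P g2 -> eqv adj f (ecomp g1 g2) -> product_of adj P f.
Proof.
move=> hg1 hg2 hf; exists [:: g1; g2]; split; first by case=> [|[]].
by move=> t; apply: req_trans (hf t) _; rewrite /= /ecomp /idm wsubst_gen1; apply: req_refl.
Qed.

Lemma pconj_set0 (z : letter T) : eqv adj (pconj z set0) (@idm T).
Proof. by move=> t; rewrite /pconj in_set0; apply: req_refl. Qed.

End Generators.

Lemma conj_inner_K_sub (T : finType) (adj : rel T) (Z : {set T}) (tau tau_inv : endo T) w :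
  symmetric adj -> is_inv adj tau tau_inv -> K_sub adj Z (ecomp (ecomp tau (inner w)) tau_inv).
Proof.
move=> adj_sym hinv; apply: (gs_eqv (f := inner (wsubst tau w))).
  by apply: gs_base; right; right; exists (wsubst tau w); apply: eqv_refl.
apply: eqv_sym; apply: conj_eqv_of_intertwine => //; first exact: is_hom_inner.
move=> t; rewrite /ecomp /inner !wsubst_cat wsubst_winv wsubst_gen1.
exact: req_sym (wsubst_inner _ _ _).
Qed.

Section TransvectionConjugates.
Variables (T : finType) (adj : rel T).
Hypotheses (adj_sym : symmetric adj) (adj_irr : irreflexive adj).
Variables (a b : T) (tau_inv : endo T).
Hypotheses (hab : dom adj a b) (hab' : a != b).
Hypothesis tauK : is_inv adj (transv (a, false) (b, false)) tau_inv.
Local Notation tau := (transv (a, false) (b, false)).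
Local Notation conj p := (ecomp (ecomp tau p) tau_inv).

Lemma conj_K_sub Z p g :
  K_sub adj Z g -> is_hom adj g -> eqv adj (ecomp tau p) (ecomp g tau) -> K_sub adj Z (conj p).
Proof. by move=> Kg hg h; apply: gs_eqv Kg _; apply: eqv_sym; apply: conj_eqv_of_intertwine. Qed.

Lemma conj_K_sub2 Z p g1 g2 :
  K_sub adj Z g1 -> K_sub adj Z g2 -> is_hom adj g1 -> is_hom adj g2 ->
  eqv adj (ecomp tau p) (ecomp (ecomp g1 g2) tau) -> K_sub adj Z (conj p).
Proof. by move=> K1 K2 h1 h2; apply: conj_K_sub (gs_comp K1 K2) (is_hom_ecomp h1 h2). Qed.

Lemma conj_product1 P p g :
  P g -> is_hom adj g -> eqv adj (ecomp tau p) (ecomp g tau) -> product_of adj P (conj p).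
Proof. by move=> Pg hg h; apply: product_of1 Pg _; apply: conj_eqv_of_intertwine. Qed.

Lemma conj_product2 P p g1 g2 :
  P g1 -> P g2 -> is_hom adj g1 -> is_hom adj g2 ->
  eqv adj (ecomp tau p) (ecomp (ecomp g1 g2) tau) -> product_of adj P (conj p).
Proof.
move=> P1 P2 h1 h2 h; apply: product_of2 P1 P2 _.
by apply: conj_eqv_of_intertwine => //; apply: is_hom_ecomp.
Qed.

Lemma conj_transv_pconjb1 (Z : {set T}) (c : T) :
  a \in Z -> b \in Z -> c \in Z -> dom adj b c -> c != a -> c != b ->
  K_sub adj Z (conj (pconj (b, false) [set c])).
Proof.
move=> aZ bZ cZ hbc nca ncb.
have hac_hab : adj a c -> adj a b.
  move=> hac; rewrite adj_sym in hac.
  by case/orP: (domP hbc hac) => [|/eqP eab]; [rewrite adj_sym | move: hab'; rewrite eab eqxx].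
apply: (conj_K_sub2 (g2 := pconj (a, false) [set y in [set c] | ~~ adj a y])
          (K_sub_pconj1 bZ cZ _ hbc) _ (is_hom_pconj1 adj_sym hbc)).
- by rewrite eq_sym.
- case hac: (adj a c).
  + have -> : [set y in [set c] | ~~ adj a y] = set0.
      by apply/setP => y; rewrite !inE; case: eqP => // ->; rewrite hac.
    by apply: gs_eqv (eqv_sym (pconj_set0 adj _)); apply: gs_id.
  + have -> : [set y in [set c] | ~~ adj a y] = [set c].
      by apply/setP => y; rewrite !inE; case: eqP => // ->; rewrite hac.
    apply: K_sub_pconj1; rewrite 1?eq_sym //; apply: domI => t hct.
    case/orP: (domP hbc hct) => [hbt|/eqP etb]; first exact: domP hab hbt.
    subst t; rewrite adj_sym in hct.
    by case/orP: (domP hab hct); rewrite ?hac // => /eqP eca; rewrite eca eqxx in nca.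
- apply: is_hom_pconj => // s t; rewrite !inE => /andP[/eqP -> nac] _ hct.
  case/orP: (domP hbc hct) => [hbt|/eqP etb]; first exact: domP hab hbt.
  rewrite etb adj_sym in hct.
  by case/orP: (domP hab hct) => [h|/eqP eca]; [rewrite h in nac | rewrite eca eqxx in nca].
- apply: transv_pconjb_out => //; rewrite ?inE 1?eq_sym //.
  by move=> t /[1!inE] /eqP ->.
Qed.

Lemma conj_transv_pconj1 (c x : T) : dom adj x c -> x != c ->
  K_sub adj [set a; b; c; x] (conj (pconj (x, false) [set c])).
Proof.
move=> hxc nxc; set Z := [set a; b; c; x].
have [aZ bZ cZ xZ] : [/\ a \in Z, b \in Z, c \in Z & x \in Z] by rewrite !inE !eqxx !orbT.
have Kp := K_sub_pconj1 xZ cZ nxc hxc.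
have hp := is_hom_pconj1 adj_sym hxc.
have nba : b != a by rewrite eq_sym.
case: (c =P b) => [ecb|/eqP ncb].
  subst c; case: (x =P a) => [exa|/eqP nxa].
    subst x; apply: conj_K_sub Kp hp _; apply: transv_pconj_commute => //.
    by rewrite !inE !eqxx (negPf hab') orbT.
  apply: (conj_K_sub2 (g2 := tau_comm (x, false) (a, true) (b, false)) Kp _ hp).
  - exact: K_sub_tau_comm.
  - exact: is_hom_tau_comm.
  - by apply: transv_pconj_tau_comm_r; rewrite ?inE ?eqxx.
case: (c =P a) => [eca|/eqP nca].
  subst c; case: (x =P b) => [exb|/eqP nxb].
    subst x; apply: conj_K_sub2 (K_sub_pconj1 aZ bZ hab' hab) Kp (is_hom_pconj1 adj_sym hab) hp _.
    have -> : [set b] = [set y in [set a] | ~~ adj a y & y != a] :|: [set b].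
      by apply/setP => y; rewrite !inE; case: (y =P a) => [->|]; rewrite ?andbF.
    by apply: transv_pconjb_in; rewrite ?inE ?eqxx.
  have hxb := dom_trans adj_sym hxc hab.
  apply: (conj_K_sub2 (g1 := tau_comm (a, true) (x, false) (b, false)) _ Kp _ hp).
  - by apply: K_sub_tau_comm; rewrite //= eq_sym.
  - exact: is_hom_tau_comm.
  - by apply: transv_pconj_tau_comm_l; rewrite ?inE ?eqxx.
case: (x =P b) => [exb|/eqP nxb]; first by subst x; apply: conj_transv_pconjb1.
apply: conj_K_sub Kp hp _; apply: transv_pconj_commute => //.
by rewrite !inE [b == c]eq_sym [a == c]eq_sym (negPf ncb) (negPf nca).
Qed.

Definition pconj_factor (x : T) (Y : {set T}) (g : endo T) : Prop :=
  K_sub adj [set a; b; x] g \/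
  exists (z : T) (Y' : {set T}),
    [/\ z \in [set a; x], pc_domain adj z Y', Y' \subset Y :|: [set x; a]
       & eqv adj g (pconj (z, false) Y')].

Lemma pconj_factor_pconj (x z : T) (Y Y' : {set T}) :
  z \in [set a; x] -> pc_domain adj z Y' -> Y' \subset Y :|: [set x; a] ->
  pconj_factor x Y (pconj (z, false) Y').
Proof. by move=> *; right; exists z, Y'; split => //; apply: eqv_refl. Qed.

Lemma conj_transv_pconj_ne (x : T) (Y : {set T}) : pc_domain adj x Y -> x != b ->
  product_of adj (pconj_factor x Y) (conj (pconj (x, false) Y)).
Proof.
move=> hY nxb; have hxY := pc_domain_notin hY.
have hp := is_hom_pconj_domain adj_sym hY.
have Pp : pconj_factor x Y (pconj (x, false) Y).
  by apply: pconj_factor_pconj; rewrite ?inE ?eqxx ?orbT // subsetUl.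
case hc: (((b \in Y) == (a \in Y)) || adj x a || ((x == a) && (a \notin Y))).
  by apply: conj_product1 Pp hp _; apply: transv_pconj_commute.
have nxa : x != a by apply/eqP => exa; move: hc; rewrite -exa eqxx hxY !orbT.
have [anx bnx] : a != x /\ b != x by rewrite ![_ == x]eq_sym.
have nax : ~~ adj a x by rewrite adj_sym; apply/negP => hxa; rewrite hxa !orbT in hc.
move: hc; rewrite adj_sym (negPf nax) (negPf nxa) /= orbF.
case hbY: (b \in Y); case haY: (a \in Y) => //= _.
- have hxb := dom_pc_domain_in_out adj_sym hY hab hbY (negbT haY) nax anx.
  apply: (conj_product2 (g2 := tau_comm (x, false) (a, true) (b, false)) Pp _ hp).
  + by left; apply: K_sub_tau_comm; rewrite //= ?inE ?eqxx ?orbT.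
  + exact: is_hom_tau_comm.
  + by apply: transv_pconj_tau_comm_r; rewrite ?haY.
- have hxb := dom_pc_domain_out_in adj_sym hY hab (negbT hbY) haY nax bnx.
  apply: (conj_product2 (g1 := tau_comm (a, true) (x, false) (b, false)) _ Pp _ hp).
  + by left; apply: K_sub_tau_comm; rewrite //= ?inE ?eqxx ?orbT // eq_sym.
  + exact: is_hom_tau_comm.
  + by apply: transv_pconj_tau_comm_l; rewrite ?hbY.
Qed.

Lemma conj_transv_pconjb_out (Y : {set T}) : pc_domain adj b Y -> a \notin Y ->
  product_of adj (pconj_factor b Y) (conj (pconj (b, false) Y)).
Proof.
move=> hY haY; have [D1 D2] := hY.
have nbY := pc_domain_notin hY.
have hYab t : t \in Y -> adj a t -> adj a b.
  move=> htY hat; rewrite adj_sym in hat; rewrite adj_sym; apply/negPn/negP => nba.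
  by rewrite (D2 t a htY hat nba hab') in haY.
have hY1 : pc_domain adj a [set y in Y | ~~ adj a y].
  split=> [y|y t]; rewrite !inE.
  - by case/andP=> hy ->; split=> //; apply: contraNneq haY => <-.
  - case/andP=> hy nay hyt nat nta; rewrite nat andbT.
    case: (t =P b) => [etb|/eqP ntb]; first by case: (D1 _ hy); rewrite -etb adj_sym hyt.
    apply: D2 hy hyt _ ntb; apply/negP => /(domP hab).
    by rewrite (negPf nat) (negPf nta).
apply: (conj_product2 (g1 := pconj (b, false) Y)
                      (g2 := pconj (a, false) [set y in Y | ~~ adj a y])).
- by apply: pconj_factor_pconj; rewrite ?inE ?eqxx ?orbT // subsetUl.
- apply: pconj_factor_pconj; rewrite ?inE ?eqxx //.
  by apply/subsetP => y; rewrite !inE => /andP[->].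
- exact: is_hom_pconj_domain.
- exact: is_hom_pconj_domain.
- exact: transv_pconjb_out.
Qed.

Lemma conj_transv_pconjb_in (Y : {set T}) : pc_domain adj b Y -> a \in Y ->
  product_of adj (pconj_factor b Y) (conj (pconj (b, false) Y)).
Proof.
move=> hY haY; have [D1 D2] := hY.
set Y2 := [set y in Y | ~~ adj a y & y != a] :|: [set b].
have nab : ~~ adj a b by rewrite adj_sym; case: (D1 _ haY).
have not_st_a t : adj b t -> ~~ adj a t -> t != a -> False.
  by move=> /(domP hab); rewrite orbC => /orP[/eqP -> | ->]; rewrite ?eqxx.
have hY2 : pc_domain adj a Y2.
  split=> [y|y t]; rewrite !inE.
  - by case/orP=> [/and3P[_ -> ->] | /eqP ->] //; rewrite nab eq_sym.
  - case/orP=> [/and3P[hy _ _] | /eqP ->] hyt nat nta; last by case: (not_st_a t).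
    rewrite nat nta andbT; case: (t =P b) => [_|/eqP ntb]; first by rewrite orbT.
    by rewrite (D2 y t hy hyt _ ntb) //; apply/negP => hbt; apply: (not_st_a t).
apply: (conj_product2 (g1 := pconj (a, false) Y2) (g2 := pconj (b, false) Y)).
- apply: pconj_factor_pconj; rewrite ?inE ?eqxx //.
  by apply/subsetP => y; rewrite !inE => /orP[/and3P[-> _ _] | ->]; rewrite ?orbT.
- by apply: pconj_factor_pconj; rewrite ?inE ?eqxx ?orbT // subsetUl.
- exact: is_hom_pconj_domain.
- exact: is_hom_pconj_domain.
- exact: transv_pconjb_in (pc_domain_notin hY) haY.
Qed.

Lemma conj_transv_pconj (x : T) (Y : {set T}) : pc_domain adj x Y ->
  product_of adj (pconj_factor x Y) (conj (pconj (x, false) Y)).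
Proof.
case: (x =P b) => [-> hY|/eqP nxb hY]; last exact: conj_transv_pconj_ne.
by case: (boolP (a \in Y)) => haY; [apply: conj_transv_pconjb_in | apply: conj_transv_pconjb_out].
Qed.

End TransvectionConjugates.

Theorem mainTheorem3 (T : finType) (adj : rel T)
  (adj_sym : symmetric adj) (adj_irr : irreflexive adj)
  (a b c x : T)
  (hab : dom adj a b) (hab' : a != b) (hxc : dom adj x c) (hxc' : x != c) :
  let tau := transv (a, false) (b, false) in
  forall tau_inv : endo T, is_hom adj tau_inv -> is_inv adj tau tau_inv ->
  (* (1) *)
  K_sub adj [set a; b; c; x]
    (ecomp (ecomp tau (pconj (x, false) [set c])) tau_inv)
  /\
  (* (2) *)
  (forall Y : {set T}, pc_domain adj x Y ->
     product_of adj
       (fun g => K_sub adj [set a; b; x] g \/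
          exists (z : T) (Y' : {set T}),
            [/\ z \in [set a; x], pc_domain adj z Y',
                Y' \subset Y :|: [set x; a] & eqv adj g (pconj (z, false) Y')])
       (ecomp (ecomp tau (pconj (x, false) Y)) tau_inv))
  /\
  (* (3) *)
  K_sub adj [set a; b; x]
    (ecomp (ecomp tau (inner (gen1 x))) tau_inv).
Proof.
move=> tau tau_inv _ tauK; split; [|split].
- exact: conj_transv_pconj1.
- by move=> Y; apply: conj_transv_pconj.
- exact: conj_inner_K_sub.
Qed.
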